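(* Let $G$ be a non-regular simple graph on $n$ vertices, and let $u,v$ be vertices of $G$ with $d_G(u)<d_G(v)$. Let $R:=V(G)\setminus\{u,v\}$, $X:=N(u)\setminus N[v]$, and $Z:=\{w\in R: w\notin N(u)\cup N(v)\}$. If $F_k(G)$ is regular for some integer $k$ with $2\le k\le n-2$, then $X=\emptyset$ and $Z=\emptyset$.
   Context: For a simple graph $G=(V,E)$ on $n$ vertices and an integer $1\le k<n$, the $k$-token graph $F_k(G)$ is the graph whose vertices are all $k$-element subsets of $V$, two such subsets $A,B$ being adjacent whenever their symmetric difference $A\triangle B$ is a pair $\{a,b\}$ with $a$ adjacent to $b$ in $G$. $N(x)$ is the set of neighbors of $x$ in $G$, $N[x]=N(x)\cup\{x\}$, and $d_G(x)=|N(x)|$. *)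

From mathcomp Require Import all_boot.
Set Implicit Arguments. Unset Strict Implicit. Unset Printing Implicit Defensive.

Definition simple_graph (T : finType) (e : rel T) : Prop :=
  irreflexive e /\ symmetric e.

Definition nbhd (T : finType) (e : rel T) (x : T) : {set T} := [set y | e x y].
Definition deg (T : finType) (e : rel T) (x : T) : nat := #|nbhd e x|.

Definition regular (T : finType) (e : rel T) : Prop :=
  forall x y : T, deg e x = deg e y.

(* adjacency in the k-token graph: A (+) B = {a,b} with a ~ b in G *)
Definition token_adj (T : finType) (e : rel T) (A B : {set T}) : bool :=
  [exists a : T, exists b : T,
     e a b && ((A :\: B) :|: (B :\: A) == [set a; b])].

Definition token_vertices (T : finType) (k : nat) : {set {set T}} :=
  [set A : {set T} | #|A| == k].

Definition token_deg (T : finType) (e : rel T) (k : nat) (A : {set T}) : nat :=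
  #|[set B in token_vertices T k | token_adj e A B]|.

Definition token_regular (T : finType) (e : rel T) (k : nat) : Prop :=
  forall A B : {set T}, A \in token_vertices T k -> B \in token_vertices T k ->
    token_deg e k A = token_deg e k B.

From mathcomp Require Import all_boot zify.
Set Implicit Arguments. Unset Strict Implicit. Unset Printing Implicit Defensive.

(* For a k-set A, the degree of A in F_k(G) is the number of edges a ~ b of G
   leaving A (a in A, b not in A): each of them yields exactly one neighbour,
   obtained by sliding the token from a to b. Adding a vertex w to a set S
   changes that count by d(w) - 2|N(w) :&: S|. Hence regularity of F_k(G),
   applied to u + S and v + S for every (k-1)-set S avoiding u and v, gives
   d(v) - d(u) = 2(|N(v) :&: S| - |N(u) :&: S|) for all such S. As d(u) < d(v),
   some y <> u is adjacent to v but not to u; if some w other than u, v were not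
   adjacent to v, trading y for w in S (possible since 2 <= k <= n - 2) would
   lower the right-hand side. So v is adjacent to every vertex but u, v, which
   empties both X and Z. *)

Lemma card_set_sumb (X : finType) (P : pred X) :
  #|[set x | P x]| = \sum_x (P x : nat).
Proof. by rewrite -sum1dep_card big_mkcond /=; apply: eq_bigr => x _; case: (P x). Qed.

Lemma subset_of_card (T : finType) (A : {set T}) n :
  n <= #|A| -> exists2 S : {set T}, S \subset A & #|S| = n.
Proof.
case/card_geqP=> s [uniq_s size_s sA]; exists [set x in s].
  by apply/subsetP=> x; rewrite inE => /sA.
by rewrite cardsE (card_uniqP uniq_s).
Qed.

Lemma eq_card_setD_neq0 (T : finType) (A B : {set T}) :
  #|A| = #|B| -> A != B -> A :\: B != set0.
Proof. by move=> cAB; apply: contra; rewrite setD_eq0 eqEcard cAB leqnn andbT. Qed.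

Lemma cardsIU1 (T : finType) (N S : {set T}) a : a \notin S ->
  #|N :&: (a |: S)| = (a \in N) + #|N :&: S|.
Proof.
move=> aS; rewrite setIUr cardsU.
have -> : N :&: [set a] :&: (N :&: S) = set0.
  apply/setP => z; rewrite !inE; apply/andP => -[/andP[_ /eqP ->]].
  by rewrite (negbTE aS) andbF.
rewrite cards0 subn0; congr (_ + _).
case: (boolP (a \in N)) => aN.
  by rewrite (setIidPr _) ?sub1set ?cards1.
by rewrite (disjoint_setI0 _) ?cards0 // disjoint_sym disjoints1.
Qed.

Section SimpleGraph.
Variables (T : finType) (e : rel T).
Hypotheses (e_irr : irreflexive e) (e_sym : symmetric e).

Definition boundary (A : {set T}) : {set T * T} :=
  [set p | (p.1 \in A) && (p.2 \notin A) && e p.1 p.2].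

Definition token_slide (A : {set T}) (p : T * T) : {set T} := p.2 |: (A :\ p.1).

Lemma edge_neq a b : e a b -> a != b.
Proof. by apply: contraTneq => ->; rewrite e_irr. Qed.

Lemma card_nbhdI_fst w (S : {set T}) :
  #|nbhd e w :&: S| = #|[set p : T * T | (p.1 == w) && (p.2 \in S) && e p.1 p.2]|.
Proof.
rewrite -(@card_imset _ _ (pair w)); last by move=> x y [].
apply: eq_card => -[a b]; rewrite !inE /=.
apply/imsetP/idP => [[c] |/andP[/andP[/eqP -> bS] eab]].
  by rewrite !inE => /andP[ec cS] [-> ->]; rewrite eqxx cS.
by exists b; rewrite ?inE ?eab.
Qed.

Lemma card_nbhdI_snd w (S : {set T}) :
  #|nbhd e w :&: S| = #|[set p : T * T | (p.2 == w) && (p.1 \in S) && e p.1 p.2]|.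
Proof.
rewrite card_nbhdI_fst -(card_preimset _ (can_inj (@swap_pairK T T))).
by apply: eq_card => -[a b]; rewrite !inE /= e_sym.
Qed.

Lemma boundary_setU1 (S : {set T}) w : w \notin S ->
  #|boundary (w |: S)| + 2 * #|nbhd e w :&: S| = #|boundary S| + deg e w.
Proof.
move=> wS; rewrite mul2n -addnn {1}card_nbhdI_fst card_nbhdI_snd.
rewrite /deg -[nbhd e w]setIT card_nbhdI_fst.
rewrite !card_set_sumb -!big_split /=; apply: eq_bigr => -[a b] _ /=; rewrite !inE /=.
case eab: (e a b); last by rewrite !andbF.
have := edge_neq eab; case: (a =P w) => [->|_]; case: (b =P w) => [->|_];
  rewrite ?eqxx ?andbT ?andbF ?addn0 //= => _.
- by rewrite (negbTE wS); case: (b \in S).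
- by rewrite (negbTE wS); case: (a \in S).
Qed.

Lemma token_slide_inj A : {in boundary A &, injective (token_slide A)}.
Proof.
move=> [a b] [c d]; rewrite !inE /token_slide /=.
move=> /andP[/andP[aA bA] _] /andP[/andP[cA dA] _] eq_slide.
have bd : b = d.
  apply/eqP; move: (setU11 b (A :\ a)).
  by rewrite eq_slide !inE (negbTE bA) andbF orbF eq_sym.
have ac : a = c.
  have : a \notin b |: (A :\ a) by rewrite !inE eqxx orbF; apply: contraNneq bA => <-.
  by rewrite eq_slide !inE aA andbT negb_or negbK => /andP[_ /eqP].
by rewrite ac bd.
Qed.

Lemma card_token_slide A p : p \in boundary A -> #|token_slide A p| = #|A|.
Proof.
case: p => a b; rewrite !inE /token_slide /= => /andP[/andP[aA bA] _].
by rewrite cardsU1 !inE negb_and bA orbT (cardsD1 a A) aA.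
Qed.

Lemma token_adj_slide A p : p \in boundary A -> token_adj e A (token_slide A p).
Proof.
case: p => a b; rewrite !inE /token_slide /= => /andP[/andP[aA bA] eab].
apply/existsP; exists a; apply/existsP; exists b; rewrite eab /=.
apply/eqP/setP => z; rewrite !inE.
case: (z =P a) => [->|_]; first by rewrite aA (negbTE (edge_neq eab)).
by case: (z =P b) => [->|_]; rewrite ?(negbTE bA) //=; case: (z \in A).
Qed.

Lemma token_slide_symdiff (A B : {set T}) a b :
  A :\: B :|: B :\: A = [set a; b] -> a \in A -> b \notin A ->
  B = token_slide A (a, b).
Proof.
move=> dAB aA bA; apply/setP => z.
have : (z \in A :\: B :|: B :\: A) = (z \in [set a; b]) by rewrite dAB.
rewrite /token_slide !inE /=.
have ab : a != b by apply: contraNneq bA => <-.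
case: (z =P a) => [->|_]; first by rewrite aA (negbTE ab); case: (a \in B).
case: (z =P b) => [->|_]; first by rewrite (negbTE bA) /=; case: (b \in B).
by case: (z \in A); case: (z \in B).
Qed.

Lemma token_adj_slideP (A B : {set T}) : #|A| = #|B| -> token_adj e A B ->
  exists2 p, p \in boundary A & B = token_slide A p.
Proof.
move=> cAB /existsP[a /existsP[b /andP[eab /eqP dAB]]].
have nAB : A != B.
  by apply: contraTneq (set21 a b) => AB; rewrite -dAB AB setDv setU0 inE.
have [a' a'AB] := set0Pn _ (eq_card_setD_neq0 cAB nAB).
have nBA : B != A by rewrite eq_sym.
have [b' b'BA] := set0Pn _ (eq_card_setD_neq0 (esym cAB) nBA).
have a'ab : a' \in [set a; b] by rewrite -dAB in_setU a'AB.
have b'ab : b' \in [set a; b] by rewrite -dAB in_setU b'BA orbT.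
move: a'AB b'BA; rewrite !inE => /andP[a'B a'A] /andP[b'A b'B].
have a'b' : a' != b' by apply: contraNneq b'A => <-.
have e'ab : e a' b'.
  move: a'ab b'ab a'b'; rewrite !inE => /orP[]/eqP-> /orP[]/eqP->; rewrite ?eqxx // => _.
  by rewrite e_sym.
have d'AB : A :\: B :|: B :\: A = [set a'; b'].
  rewrite dAB; apply/esym/eqP; rewrite eqEcard !cards2 a'b' (edge_neq eab) leqnn andbT.
  by apply/subsetP => z; rewrite in_set2 => /orP[]/eqP->.
exists (a', b'); first by rewrite !inE a'A b'A e'ab.
exact: token_slide_symdiff d'AB a'A b'A.
Qed.

Lemma token_deg_boundary k (A : {set T}) :
  #|A| = k -> token_deg e k A = #|boundary A|.
Proof.
move=> cA; rewrite /token_deg -(card_in_imset (@token_slide_inj A)).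
apply: eq_card => B; rewrite !inE.
apply/andP/imsetP => [[/eqP cB adjAB] | [p pA ->]].
  by apply: token_adj_slideP; rewrite // cA cB.
by rewrite card_token_slide // cA token_adj_slide.
Qed.

Lemma nbhd_diff_of_deg_lt u v : deg e u < deg e v ->
  exists y, [/\ y \in nbhd e v, y \notin nbhd e u & y != u].
Proof.
move=> duv; have : ~~ (nbhd e v :\ u \subset nbhd e u :\ v).
  apply: contraTN duv => /subset_leq_card; rewrite -leqNgt /deg.
  by rewrite (cardsD1 u (nbhd e v)) (cardsD1 v (nbhd e u)) !inE e_sym leq_add2l.
case/subsetPn => y; rewrite !inE => /andP[yu yv]; rewrite negb_and negbK.
case/orP => [/eqP yv' | nuy]; first by rewrite yv' e_irr in yv.
by exists y; rewrite !inE.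
Qed.

Section TokenRegular.
Variables (u v : T) (k : nat).
Hypothesis token_reg : token_regular e k.

Lemma token_regular_balance (S : {set T}) :
  u \notin S -> v \notin S -> #|S|.+1 = k ->
  deg e u + 2 * #|nbhd e v :&: S| = deg e v + 2 * #|nbhd e u :&: S|.
Proof.
move=> uS vS cS.
have cuS : #|u |: S| = k by rewrite cardsU1 uS.
have cvS : #|v |: S| = k by rewrite cardsU1 vS.
have := @token_reg (u |: S) (v |: S); rewrite !inE cuS cvS eqxx => /(_ isT isT).
rewrite !token_deg_boundary //.
have := boundary_setU1 uS; have := boundary_setU1 vS; lia.
Qed.

Lemma token_regular_in_nbhd w : deg e u < deg e v -> 2 <= k <= #|T| - 2 ->
  w != u -> w != v -> w \in nbhd e v.
Proof.
move=> duv /andP[k2 kn] wu wv; apply/negPn/negP => wNv.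
have ck : (1 + (k - 2)).+1 = k by lia.
have [y [yNv yNu yu]] := nbhd_diff_of_deg_lt duv.
pose Q := [set u; v; w; y].
have cQ : #|Q| <= 4 by rewrite !cardsU !cards1; lia.
have cQC : k - 2 <= #|~: Q| by have := cardsC Q; lia.
have [S0 S0Q cS0] := subset_of_card cQC.
have notin_S0 z : z \in Q -> z \notin S0.
  by move=> zQ; apply: contraL zQ => /(subsetP S0Q); rewrite inE.
have uS0 : u \notin S0 by apply: notin_S0; rewrite !inE eqxx.
have vS0 : v \notin S0 by apply: notin_S0; rewrite !inE eqxx !orbT.
have wS0 : w \notin S0 by apply: notin_S0; rewrite !inE eqxx !orbT.
have yS0 : y \notin S0 by apply: notin_S0; rewrite !inE eqxx !orbT.
have := @token_regular_balance (y |: S0); have := @token_regular_balance (w |: S0).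
have yv : y != v by apply: contraTneq yNv => ->; rewrite inE e_irr.
rewrite !cardsIU1 // !cardsU1 !in_setU1 !negb_or wS0 yS0 uS0 vS0 cS0.
rewrite ![u == _]eq_sym ![v == _]eq_sym wu wv yu yv (negbTE wNv) (negbTE yNu) yNv /=.
move=> /(_ isT isT ck) balance_w /(_ isT isT ck) balance_y.
clear -balance_w balance_y; lia.
Qed.

End TokenRegular.
End SimpleGraph.

Theorem corollary2 (T : finType) (e : rel T) (u v : T) (k : nat) :
  simple_graph e ->
  ~ regular e ->
  deg e u < deg e v ->
  2 <= k <= #|T| - 2 ->
  token_regular e k ->
  [set w | (w \in nbhd e u) && (w \notin nbhd e v) && (w != v)] = set0 /\
  [set w | (w != u) && (w != v) && (w \notin nbhd e u) && (w \notin nbhd e v)] = set0.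
Proof.
move=> [e_irr e_sym] _ duv hk token_reg.
have Nv w : w != u -> w != v -> e v w.
  move=> wu wv; have := token_regular_in_nbhd e_irr e_sym token_reg duv hk wu wv.
  by rewrite inE.
split; apply/setP => w; rewrite !inE; apply/negbTE.
  apply/andP => -[/andP[euw Nvw] wv]; move: Nvw; rewrite Nv //.
  by apply: contraTneq euw => ->; rewrite e_irr.
by apply/negP => /andP[/andP[/andP[wu wv] _]]; rewrite Nv.
Qed.
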